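(* Let $\Sigma$ be a finite alphabet, $S=s_0\cdots s_{m-1}\in\Sigma^m$, and $a,a'\in\Sigma^m$ with $\mathrm{rep}_{\mathrm{Sub}(S)}(a)=\mathrm{rep}_{\mathrm{Sub}(S)}(a')$. Then $f^S_{\mathrm{B(N)DM}}(a)=f^S_{\mathrm{B(N)DM}}(a')$ and $g^S_{\mathrm{B(N)DM}}(a)=g^S_{\mathrm{B(N)DM}}(a')$.
   Context: $\mathrm{Sub}(S)$ is the set of all substrings of $S$, including $\varepsilon$; $\mathrm{rep}_{\mathrm{Sub}(S)}(a)$ is the longest suffix of $a$ that is a substring of $S$. Let $S^{\mathrm{rev}}=s_{m-1}\cdots s_0$. The suffix automaton of $S^{\mathrm{rev}}$ is the deterministic automaton accepting exactly the suffixes of $S^{\mathrm{rev}}$, extended with a non-accepting sink FAIL entered as soon as the string read so far is not a substring of $S^{\mathrm{rev}}$. A window $w=w_0\cdots w_{m-1}$ is read from right to left, i.e. the automaton reads $w^{\mathrm{rev}}=w_{m-1}\cdots w_0$. Let $j^S_w$ be the number of transitions performed before entering FAIL (not counting the transition into FAIL). Cost: $f^S_{\mathrm{B(N)DM}}(w)=m$ if $w=S$, otherwise $j^S_w+1$. Let $\mathcal{I}^S(w)\subseteq\{0,\dots,m-1\}$ be the set of $i$ such that the automaton is in an accepting state after reading $i$ characters of $w^{\mathrm{rev}}$ (equivalently, $w_{m-i}\cdots w_{m-1}$ is a prefix of $S$). Shift: $g^S_{\mathrm{B(N)DM}}(w)=\min\{m-i: i\in\mathcal{I}^S(w)\}$.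 *)

From mathcomp Require Import all_boot.
Set Implicit Arguments. Unset Strict Implicit. Unset Printing Implicit Defensive.

Section Defs.
Variable T : finType.

Definition is_sub (S x : seq T) : bool := infix x S.

(* rep_{Sub(S)}(a): the longest suffix of a that is a substring of S.
   Suffixes of a are drop k a, k = 0 .. size a; take the smallest such k. *)
Definition rep_sub (S a : seq T) : seq T :=
  drop (find (fun k => is_sub S (drop k a)) (iota 0 (size a).+1)) a.

(* The suffix automaton of S^rev (with sink FAIL) reading w^rev: after reading
   i characters the string read is take i (rev w); the automaton is in FAIL
   iff this string is not a substring of rev S (FAIL is absorbing, and
   substrings are closed under prefixes).  j^S_w = number of transitions
   performed before entering FAIL = index of the first step i+1 (i < m)
   whose read string is not a substring of rev S, or m if there is none. *)
Definition jBDM (S w : seq T) : nat :=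
  let m := size S in
  find (fun i => ~~ is_sub (rev S) (take i.+1 (rev w))) (iota 0 m).

Definition fBDM (S w : seq T) : nat :=
  if w == S then size S else (jBDM S w).+1.

(* Accepting state after reading i characters: the string read is a suffix
   of S^rev. *)
Definition accepting (S w : seq T) (i : nat) : bool :=
  suffix (take i (rev w)) (rev S).

(* Shift g^S_{B(N)DM}(w) = min { m - i : i in I^S(w) }, I^S(w) a subset of {0..m-1}
   (nonempty since 0 is in it; the default m of the empty min is irrelevant). *)
Definition gBDM (S w : seq T) : nat :=
  let m := size S in
  \big[minn/m]_(i < m | accepting S w i) (m - i).

End Defs.

(* Substrings of S are closed under taking suffixes, so the suffixes of a that
   lie in Sub(S) are exactly the suffixes of rep(a), and those suffixes of a
   coincide with the corresponding suffixes of rep(a).  Both the run of the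
   automaton on a^rev (how long it survives, and when it accepts) and the test
   a = S only look at such suffixes, hence only at rep(a). *)
From mathcomp Require Import all_boot.
From mathcomp Require Import zify.

Set Implicit Arguments.
Unset Strict Implicit.
Unset Printing Implicit Defensive.

Lemma drop_size_catr (T : Type) (p r : seq T) i : i <= size r ->
  drop (size (p ++ r) - i) (p ++ r) = drop (size r - i) r.
Proof.
move=> le_ir; rewrite drop_cat size_cat ifN; last lia.
by congr drop; lia.
Qed.

Lemma find_iota_geq n m : n <= m -> find (fun i => n <= i) (iota 0 m) = n.
Proof.
move=> le_nm; rewrite -(subnKC le_nm) iotaD find_cat size_iota.
have -> : has (fun i => n <= i) (iota 0 n) = false.
  by apply/negbTE/hasPn => i; rewrite mem_iota; lia.
by case: (m - n) => [|k] /=; rewrite ?leqnn; lia.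
Qed.

Section RepSub.
Variables (T : finType) (S a : seq T).

Let K := find (fun k => is_sub S (drop k a)) (iota 0 (size a).+1).

Lemma rep_index_spec : [/\ K <= size a, is_sub S (drop K a) &
  forall j, j < K -> ~~ is_sub S (drop j a)].
Proof.
have has_sub : has (fun k => is_sub S (drop k a)) (iota 0 (size a).+1).
  apply/hasP; exists (size a); first by rewrite mem_iota ltnSn.
  by rewrite drop_size /is_sub infix0s.
have lt_K : K < (size a).+1 by rewrite -[X in _ < X](size_iota 0) -has_find.
split; first by [].
  by have := nth_find 0 has_sub; rewrite -/K nth_iota.
by move=> j lt_jK; have := before_find 0 lt_jK; rewrite nth_iota ?add0n //; lia.
Qed.

Lemma size_rep_sub : size (rep_sub S a) = size a - K.
Proof. exact: size_drop. Qed.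

Lemma is_sub_suffix i : i <= size a ->
  is_sub S (drop (size a - i) a) = (i <= size (rep_sub S a)).
Proof.
case: rep_index_spec => le_Ka sub_K min_K le_ia; rewrite size_rep_sub.
case: leqP => [le_i | lt_i]; last by apply/negbTE/min_K; lia.
have -> : size a - i = (size a - K - i) + K by lia.
by rewrite -drop_drop; apply: infix_trans sub_K; apply: infix_drop.
Qed.

Lemma drop_rep_sub i : i <= size (rep_sub S a) ->
  drop (size a - i) a = drop (size (rep_sub S a) - i) (rep_sub S a).
Proof.
by move=> le_i; have := @drop_size_catr _ (take K a) (drop K a) i le_i; rewrite cat_take_drop.
Qed.

Lemma jBDM_rep_sub : size a = size S -> jBDM S a = size (rep_sub S a).
Proof.
move=> eq_size; rewrite /jBDM -eq_size.
rewrite (@eq_in_find _ _ (fun i => size (rep_sub S a) <= i)); last first.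
  move=> i; rewrite mem_iota => /andP [_ lt_ia].
  by rewrite /is_sub take_rev infix_rev -/(is_sub S _) is_sub_suffix // -ltnNge.
by apply: find_iota_geq; rewrite size_rep_sub leq_subr.
Qed.

Lemma accepting_rep_sub i : i <= size a ->
  accepting S a i = (i <= size (rep_sub S a)) &&
    prefix (drop (size (rep_sub S a) - i) (rep_sub S a)) S.
Proof.
move=> le_ia; rewrite /accepting take_rev suffix_rev.
case: leqP => [le_i | lt_i]; first by rewrite drop_rep_sub.
by apply/negbTE/negP => /prefixW; rewrite -/(is_sub S _) is_sub_suffix // leqNgt lt_i.
Qed.

Lemma eq_rep_sub : size a = size S -> (a == S) = (rep_sub S a == S).
Proof.
case: rep_index_spec => le_Ka _ min_K eq_size; apply/eqP/eqP => [eq_aS | eq_repS].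
  have K0 : K = 0.
    by case: (posnP K) => // K_gt0; have := min_K 0 K_gt0; rewrite drop0 eq_aS /is_sub infix_refl.
  by rewrite /rep_sub -/K K0 drop0.
have K0 : K = 0 by move: le_Ka; have := size_rep_sub; rewrite eq_repS eq_size; lia.
by move: eq_repS; rewrite /rep_sub -/K K0 drop0.
Qed.

End RepSub.

Theorem lemma19 (T : finType) (m : nat) (S a a' : seq T) :
  size S = m -> size a = m -> size a' = m ->
  rep_sub S a = rep_sub S a' ->
  fBDM S a = fBDM S a' /\ gBDM S a = gBDM S a'.
Proof.
move=> sizeS sizea sizea' eq_rep.
have eqa : size a = size S by rewrite sizea sizeS.
have eqa' : size a' = size S by rewrite sizea' sizeS.
split.
  rewrite /fBDM (eq_rep_sub eqa) (eq_rep_sub eqa') eq_rep.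
  by rewrite (jBDM_rep_sub eqa) (jBDM_rep_sub eqa') eq_rep.
rewrite /gBDM; apply: eq_bigl => i.
have le_iS : i <= size S := ltnW (ltn_ord i).
rewrite accepting_rep_sub ?eqa // accepting_rep_sub ?eqa' //.
by rewrite eq_rep.
Qed.
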